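(* Let $(A,\to,0,1)$ be a bounded algebra satisfying ( ** ) and (DN). Then for all $x,y\in A$, $x\le y$ if and only if $y^-\le x^-$.
   Context: $(A,\to,1)$ is an algebra of type $(2,0)$ and $x\le y$ means $x\to y=1$. ( ** ): $y\to z=1$ implies $(z\to x)\to(y\to x)=1$, for all $x,y,z$. (L): $x\to1=1$ for all $x$. An element $0$ with $0\le x$ for all $x$ is a zero; the algebra is bounded, written $(A,\to,0,1)$, if it has a unique zero $0$ and satisfies (L). Negation: $x^-=x\to 0$. (DN): $(x^-)^-=x$ for all $x$. *)

Definition le {A : Type} (imp : A -> A -> A) (one : A) (x y : A) : Prop :=
  imp x y = one.

Definition cond_star {A : Type} (imp : A -> A -> A) (one : A) : Prop :=
  forall x y z : A, le imp one y z -> le imp one (imp z x) (imp y x).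

Definition cond_L {A : Type} (imp : A -> A -> A) (one : A) : Prop :=
  forall x : A, imp x one = one.

Definition is_zero {A : Type} (imp : A -> A -> A) (one : A) (z : A) : Prop :=
  forall x : A, le imp one z x.

Definition bounded {A : Type} (imp : A -> A -> A) (zero one : A) : Prop :=
  is_zero imp one zero /\
  (forall z : A, is_zero imp one z -> z = zero) /\
  cond_L imp one.

Definition neg {A : Type} (imp : A -> A -> A) (zero : A) (x : A) : A :=
  imp x zero.

Definition cond_DN {A : Type} (imp : A -> A -> A) (zero : A) : Prop :=
  forall x : A, neg imp zero (neg imp zero x) = x.


(* Negation is antitone by (**) with [x := 0]; under (DN) it is an
   involution, so applying antitonicity to [y^- <= x^-] gives back
   [x^-^- <= y^-^-], i.e. [x <= y]. *)

Lemma neg_antitone {A : Type} (imp : A -> A -> A) (zero one : A) :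
  cond_star imp one ->
  forall x y : A, le imp one x y -> le imp one (neg imp zero y) (neg imp zero x).
Proof. intros Hstar x y Hxy. exact (Hstar zero x y Hxy). Qed.

Lemma neg_reflect_le {A : Type} (imp : A -> A -> A) (zero one : A) :
  cond_star imp one -> cond_DN imp zero ->
  forall x y : A, le imp one (neg imp zero y) (neg imp zero x) -> le imp one x y.
Proof.
  intros Hstar Hdn x y H.
  rewrite <- (Hdn x), <- (Hdn y).
  exact (neg_antitone imp zero one Hstar _ _ H).
Qed.

Theorem proposition2p13 (A : Type) (imp : A -> A -> A) (zero one : A)
  (Hb : bounded imp zero one) (Hstar : cond_star imp one)
  (Hdn : cond_DN imp zero) :
  forall x y : A,
    le imp one x y <-> le imp one (neg imp zero y) (neg imp zero x).
Proof.
  intros x y; split.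
  - exact (neg_antitone imp zero one Hstar x y).
  - exact (neg_reflect_le imp zero one Hstar Hdn x y).
Qed.
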